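(* Let $n\ge 2$. Every element $\pi\in D_n$ has a unique presentation of the form $$\pi = w_{1}^{j_{1}} \cdot t_{2}^{i_{2}} \cdot w_{2}^{j_{2}} \cdot t_{3}^{i_{3}} \cdots w_{n-1}^{j_{n-1}} \cdot t_{n}^{i_{n}},$$ where $0\le i_k\le k-1$ for $2\le k\le n$ and $0\le j_k\le 1$ for $1\le k\le n-1$.
   Context: $D_n$ ($n\ge 2$) is the Coxeter group with generators $s_{1'},s_1,\dots,s_{n-1}$ and relations $s^2=1$ for each generator, $(s_i s_{i+1})^3=1$, $(s_is_j)^2=1$ for $|i-j|\ge 2$ ($1\le i,j\le n-1$), $(s_{1'}s_2)^3=1$, and $(s_{1'}s_i)^2=1$ for $1\le i\le n-1$, $i\ne 2$. For $2\le k\le n$ put $t_k=s_1\cdot s_2\cdots s_{k-1}$, and for $1\le k\le n-1$ put $w_k=s_k\cdot s_{k-1}\cdots s_2\cdot s_1\cdot s_{1'}\cdot s_2\cdots s_k$ (so $w_1=s_1s_{1'}$). *)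

From mathcomp Require Import all_boot.
Set Implicit Arguments. Unset Strict Implicit. Unset Printing Implicit Defensive.

(* The Coxeter group D_n given by its presentation.
   Letters: 0 encodes s_{1'}, and k (1 <= k <= n-1) encodes s_k.
   A word is a seq nat all of whose letters are < n. *)

Definition coxm (a b : nat) : nat :=
  if a == b then 1
  else if (a == 0) then (if b == 2 then 3 else 2)
  else if (b == 0) then (if a == 2 then 3 else 2)
  else if (a == b.+1) || (b == a.+1) then 3 else 2.

Definition wpow (u : seq nat) (e : nat) : seq nat := flatten (nseq e u).

(* The congruence on words generated by the defining relations of D_n.
   Since all generators are involutions, words modulo this congruence
   are exactly the elements of the group D_n. *)
Inductive Deq (n : nat) : seq nat -> seq nat -> Prop :=
| Deq_refl u : Deq n u u
| Deq_sym u v : Deq n u v -> Deq n v u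
| Deq_trans u v w : Deq n u v -> Deq n v w -> Deq n u w
| Deq_rel a b u v : a < n -> b < n ->
    Deq n (u ++ wpow [:: a; b] (coxm a b) ++ v) (u ++ v).

Definition tword (k : nat) : seq nat := iota 1 k.-1.
Definition wword (k : nat) : seq nat := rev (iota 1 k) ++ 0 :: iota 2 k.-1.

Definition normal_form (n : nat) (i j : nat -> nat) : seq nat :=
  flatten [seq wpow (wword k) (j k) ++ wpow (tword k.+1) (i k.+1) | k <- iota 1 n.-1].

Definition nf_bounds (n : nat) (i j : nat -> nat) : Prop :=
  (forall k, 2 <= k <= n -> i k <= k - 1) /\
  (forall k, 1 <= k <= n - 1 -> j k <= 1).

(* Uniqueness: the defining relations hold for the right action of the generators on
   the signed points +-1, ..., +-n (s_k swaps k and k+1, s_1' swaps 1 and -2), so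
   equivalent words act alike.  The prefix of a normal form of D_n lies in D_(n-1) and
   fixes n, while w_(n-1)^j t_n^i sends n to (-1)^j (n - i); hence (i_n, j_(n-1)) is
   read off the image of n, and cancelling the last block reduces to D_(n-1).
   Existence: for every signed point x there is an explicit word rep(x) sending n to x,
   and rep(x) s lies in D_(n-1) rep(x s) for every generator s.  So every word is an
   element of D_(n-1) followed by some rep(x), and rep(x) is in turn D_(n-1)-equivalent
   to w_(n-1)^j t_n^i for the (i, j) with n (w_(n-1)^j t_n^i) = x.  Induct on n, starting
   from D_2 = Z/2 x Z/2. *)

From Stdlib Require Import Setoid Morphisms.
From mathcomp Require Import all_boot zify.
Set Implicit Arguments. Unset Strict Implicit. Unset Printing Implicit Defensive.

Ltac no_if t := lazymatch t with context [if _ then _ else _] => fail | _ => idtac end.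

Ltac case_eqs := repeat match goal with
  | |- context [?x == ?y] => no_if x; no_if y;
      case: (eqVneq x y) => ?; try subst; rewrite /=; try lia
  end; rewrite ?negbK.

Ltac decide_eqs := rewrite /=; repeat (match goal with
  | |- context [?x == ?y] => no_if x; no_if y;
      first [ rewrite (_ : (x == y) = true); last by apply/eqP; lia
            | rewrite (_ : (x == y) = false); last by apply/eqP; lia ]
  end; rewrite /=).

Lemma all_flatten T (P : pred T) (ss : seq (seq T)) :
  all P (flatten ss) = all (all P) ss.
Proof. by elim: ss => //= s ss IH; rewrite all_cat IH. Qed.

Lemma wpowS u e : wpow u e.+1 = u ++ wpow u e. Proof. by []. Qed.

Lemma wpow1 u : wpow u 1 = u. Proof. exact: cats0. Qed.

Lemma wpowSr u e : wpow u e.+1 = wpow u e ++ u.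
Proof. by elim: e => [|e IH]; rewrite ?wpow1 // wpowS IH catA -wpowS IH. Qed.

Lemma all_wpow (P : pred nat) u e : all P u -> all P (wpow u e).
Proof. by rewrite /wpow all_flatten all_nseq => ->; rewrite orbT. Qed.

Lemma rev_wpow a b e : rev (wpow [:: a; b] e) = wpow [:: b; a] e.
Proof. by elim: e => [|e IH] //; rewrite wpowS rev_cat IH wpowSr. Qed.

Lemma coxm_sym a b : coxm a b = coxm b a.
Proof. by rewrite /coxm eq_sym; case: a => [|a]; case: b => [|b] //=; rewrite orbC. Qed.

Lemma coxm_cases a b : [\/ a = b /\ coxm a b = 1, coxm a b = 2 | coxm a b = 3].
Proof.
rewrite /coxm; case: eqP => [->|_]; first by constructor 1.
by repeat case: ifP => _; auto using Or32, Or33.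
Qed.

Lemma coxm_far a b : 0 < a -> 0 < b -> (a.+1 < b) || (b.+1 < a) -> coxm a b = 2.
Proof. by move=> ha hb /orP hab; rewrite /coxm; decide_eqs. Qed.

Lemma coxm_0far b : b != 0 -> b != 2 -> coxm 0 b = 2.
Proof. by rewrite /coxm; case: b => [|[|[|b]]]. Qed.

Lemma coxm_adj a : 0 < a -> coxm a a.+1 = 3.
Proof. by move=> ha; rewrite /coxm; decide_eqs. Qed.

(** * Words modulo the Coxeter relations *)

#[local] Hint Resolve Deq_refl : core.

Section WordCongruence.

Variable n : nat.

Lemma Deq_ctx u v p q : Deq n u v -> Deq n (p ++ u ++ q) (p ++ v ++ q).
Proof.
elim=> {u v} [u | u v _ H | u v w _ H1 _ H2 | a b u v ha hb].
- exact: Deq_refl.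
- exact: Deq_sym.
- exact: Deq_trans H2.
- by have := Deq_rel (p ++ u) (v ++ q) ha hb; rewrite -!catA.
Qed.

#[export] Instance Deq_equiv : Equivalence (Deq n).
Proof. by split; [exact: Deq_refl | exact: Deq_sym | move=> u v w; exact: Deq_trans]. Qed.

#[export] Instance cat_Deq_proper : Proper (Deq n ==> Deq n ==> Deq n) (@cat nat).
Proof.
move=> u u' Hu v v' Hv; transitivity (u' ++ v); first exact: Deq_ctx [::] v Hu.
by have := Deq_ctx u' [::] Hv; rewrite !cats0.
Qed.

#[export] Instance cons_Deq_proper : Proper (eq ==> Deq n ==> Deq n) (@cons nat).
Proof. by move=> a _ <- u v H; have := Deq_ctx [:: a] [::] H; rewrite !cats0. Qed.

Lemma Deq_relator a b : a < n -> b < n -> Deq n (wpow [:: a; b] (coxm a b)) [::].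
Proof. by move=> ha hb; have := Deq_rel [::] [::] ha hb; rewrite cats0. Qed.

Lemma Deq_cancel a l : a < n -> Deq n (a :: a :: l) l.
Proof.
move=> ha; have := Deq_relator ha ha; rewrite /coxm eqxx wpow1 => H.
exact: Deq_ctx [::] l H.
Qed.

Lemma Deq_revK u : all (fun b => b < n) u -> Deq n (rev u ++ u) [::].
Proof.
elim: u => [|a u IH] //= /andP [ha hu].
by rewrite rev_cons -cats1 -catA /= Deq_cancel // IH.
Qed.

Lemma Deq_of_cat_rev u v : all (fun b => b < n) v -> Deq n (u ++ rev v) [::] -> Deq n u v.
Proof. by move=> hv H; rewrite -[u]cats0 -(Deq_revK hv) catA H. Qed.

Lemma Deq_comm a b l : a < n -> b < n -> coxm a b = 2 -> Deq n (a :: b :: l) (b :: a :: l).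
Proof.
move=> ha hb hab; suff H : Deq n [:: a; b] [:: b; a] by exact: Deq_ctx [::] l H.
apply: Deq_of_cat_rev; first by rewrite /= ha hb.
by have := Deq_relator ha hb; rewrite hab.
Qed.

Lemma Deq_braid a b l : a < n -> b < n -> coxm a b = 3 ->
  Deq n (a :: b :: a :: l) (b :: a :: b :: l).
Proof.
move=> ha hb hab; suff H : Deq n [:: a; b; a] [:: b; a; b] by exact: Deq_ctx [::] l H.
apply: Deq_of_cat_rev; first by rewrite /= ha hb.
by have := Deq_relator ha hb; rewrite hab.
Qed.

Lemma Deq_commute_all u a l : a < n -> all (fun b => (b < n) && (coxm a b == 2)) u ->
  Deq n (u ++ a :: l) (a :: u ++ l).
Proof.
move=> ha; elim: u => [|b u IH] //= /andP [/andP [hb /eqP hab] hu].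
by rewrite IH // Deq_comm // coxm_sym.
Qed.

Lemma Deq_widen m u v : m <= n -> Deq m u v -> Deq n u v.
Proof.
move=> hm; elim=> {u v} [u | u v _ H | u v w _ H1 _ H2 | a b u v ha hb].
- exact: Deq_refl.
- exact: Deq_sym.
- exact: Deq_trans H2.
- by apply: Deq_rel; apply: leq_trans hm.
Qed.

Lemma Deq_rev u v : Deq n u v -> Deq n (rev u) (rev v).
Proof.
elim=> {u v} [u | u v _ H | u v w _ H1 _ H2 | a b u v ha hb].
- exact: Deq_refl.
- exact: Deq_sym.
- exact: Deq_trans H2.
- by rewrite !rev_cat rev_wpow coxm_sym -catA; exact: Deq_rel.
Qed.

End WordCongruence.

(** * The signed-permutation action and uniqueness *)

(* The pair (p, s) encodes the signed point -p if s, else p. *)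
Definition act1 (a : nat) (x : nat * bool) : nat * bool :=
  if a == 0 then
    (if x.1 == 1 then (2, ~~ x.2) else if x.1 == 2 then (1, ~~ x.2) else x)
  else if x.1 == a then (a.+1, x.2) else if x.1 == a.+1 then (a, x.2) else x.

Definition act (u : seq nat) (x : nat * bool) : nat * bool := foldl (fun y a => act1 a y) x u.

Arguments act : simpl never.

Lemma act_cons a u x : act (a :: u) x = act u (act1 a x). Proof. by []. Qed.

Lemma act_cat u v x : act (u ++ v) x = act v (act u x).
Proof. exact: foldl_cat. Qed.

Lemma act1K a : involutive (act1 a).
Proof. by case=> p s; rewrite /act1 /=; case_eqs. Qed.

Lemma act_revK u x : act (rev u) (act u x) = x.
Proof.
elim: u x => [|a u IH] x //.
by rewrite rev_cons -cats1 act_cat act_cons IH /act /= act1K.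
Qed.

Lemma act_catr_inj u u' v : act (u ++ v) =1 act (u' ++ v) -> act u =1 act u'.
Proof.
move=> H x; rewrite -(act_revK v (act u x)) -(act_revK v (act u' x)).
by rewrite -(act_cat u) -(act_cat u') H.
Qed.

Lemma act1_comm a b x : coxm a b = 2 -> act1 a (act1 b x) = act1 b (act1 a x).
Proof. by case: x => p s; rewrite /coxm /act1 /=; case_eqs; move=> ?. Qed.

Lemma act1_braid a b x : coxm a b = 3 ->
  act1 a (act1 b (act1 a x)) = act1 b (act1 a (act1 b x)).
Proof. by case: x => p s; rewrite /coxm /act1 /=; case_eqs; move=> ?. Qed.

Lemma act_relator a b : act (wpow [:: a; b] (coxm a b)) =1 id.
Proof.
move=> x; rewrite /wpow /act.
case: (coxm_cases a b) => [[-> ->] | h | h].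
- by rewrite /= !act1K.
- by rewrite h /= (act1_comm _ h) !act1K.
- by rewrite h /= (act1_braid x h) !act1K.
Qed.

Lemma act_Deq n u v : Deq n u v -> act u =1 act v.
Proof.
elim=> {u v} [u | u v _ H | u v w _ H1 _ H2 | a b u v _ _] x //.
- by rewrite H1 H2.
- by rewrite !act_cat act_relator.
Qed.

Definition moves (a p : nat) : bool := if a == 0 then p <= 2 else (p == a) || (p == a.+1).

Lemma act_fix u p s : all (fun a => ~~ moves a p) u -> act u (p, s) = (p, s).
Proof.
elim: u => [|a u IH] // /andP [ha hu]; rewrite act_cons -[RHS]IH //; congr act.
by move: ha; rewrite /moves /act1 /=; case_eqs.
Qed.

Lemma act_iota m q s : 0 < q -> act (iota q m) (q, s) = (q + m, s).
Proof.
elim: m q => [|m IH] q hq /=; first by rewrite addn0.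
by rewrite act_cons /act1 /= eqxx; decide_eqs; rewrite IH // addSnnS.
Qed.

Lemma act_rev_iota m q s : 0 < q -> act (rev (iota q m)) (q + m, s) = (q, s).
Proof.
elim: m => [|m IH] hq; first by rewrite addn0.
rewrite -addn1 iotaD rev_cat /= act_cons /act1 /=; decide_eqs.
exact: IH.
Qed.

Lemma act_wword k s : 0 < k -> act (wword k) (k.+1, s) = (k.+1, ~~ s).
Proof.
move=> hk; rewrite /wword act_cat -add1n act_rev_iota // act_cons /act1 /=.
by rewrite act_iota //; case: k hk.
Qed.

Lemma act_wpow_wword k e s : 0 < k -> e <= 1 ->
  act (wpow (wword k) e) (k.+1, s) = (k.+1, s (+) (e == 1)).
Proof. by move=> hk; case: e => [|[|]] // _; rewrite ?addbF // wpow1 act_wword // addbT. Qed.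

Lemma act_tword m q s : 2 <= q <= m -> act (tword m) (q, s) = (q.-1, s).
Proof.
move=> hq; rewrite /tword.
have -> : m.-1 = (q - 2) + (1 + (m - q)) by lia.
rewrite iotaD iotaD act_cat act_fix; last first.
  by apply/allP => a; rewrite mem_iota /moves => ha; decide_eqs.
rewrite /= act_cons /act1 /=; decide_eqs.
rewrite act_fix; first by congr pair; lia.
by apply/allP => a; rewrite mem_iota /moves => ha; decide_eqs.
Qed.

Lemma act_wpow_tword m i q s : q <= m -> i < q ->
  act (wpow (tword m) i) (q, s) = (q - i, s).
Proof.
elim: i q => [|i IH] q hq hi; first by rewrite subn0.
by rewrite wpowS act_cat act_tword ?IH; [congr pair | ..]; lia.
Qed.

Definition nf_block k e f : seq nat := wpow (wword k) e ++ wpow (tword k.+1) f.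

Lemma normal_formS k i j : 0 < k ->
  normal_form k.+1 i j = normal_form k i j ++ nf_block k (j k) (i k.+1).
Proof.
case: k => // k _.
have E : iota 1 k.+1 = iota 1 k ++ [:: k.+1] by rewrite -(addn1 k) iotaD add1n addn1.
by rewrite /normal_form !succnK E map_cat flatten_cat /= cats0.
Qed.

Lemma act_nf_block k e f : 0 < k -> e <= 1 -> f <= k ->
  act (nf_block k e f) (k.+1, false) = (k.+1 - f, e == 1).
Proof. by move=> hk he hf; rewrite act_cat act_wpow_wword // act_wpow_tword. Qed.

Lemma nf_block_letters k e f : all (fun a => a < k.+1) (nf_block k e f).
Proof.
by rewrite all_cat !all_wpow //; apply/allP => a;
  rewrite /tword /wword ?mem_cat ?mem_rev ?inE !mem_iota; lia.
Qed.

Lemma normal_form_letters k i j : all (fun a => a < k) (normal_form k i j).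
Proof.
rewrite all_flatten all_map; apply/allP => q; rewrite mem_iota => hq.
by apply: sub_all (nf_block_letters q (j q) (i q.+1)) => a /=; lia.
Qed.

Lemma act_normal_form_fix k i j s : act (normal_form k i j) (k.+1, s) = (k.+1, s).
Proof.
case: k => [|[|k]] //; apply: act_fix; apply/allP => a ha.
have := allP (normal_form_letters k.+2 i j) a ha.
by rewrite /moves => ha'; case: ifP => _; lia.
Qed.

Lemma act_normal_form_top k i j : 0 < k -> i k.+1 <= k -> j k <= 1 ->
  act (normal_form k.+1 i j) (k.+1, false) = (k.+1 - i k.+1, j k == 1).
Proof.
by move=> hk hi hj; rewrite normal_formS // act_cat act_normal_form_fix act_nf_block.
Qed.

Lemma nf_boundsSn k i j : nf_bounds k.+1 i j -> nf_bounds k i j.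
Proof. by case=> hi hj; split=> q hq; [apply: hi | apply: hj]; lia. Qed.

Lemma normal_form_top_uniq k i j i' j' : 0 < k ->
  nf_bounds k.+1 i j -> nf_bounds k.+1 i' j' ->
  act (normal_form k.+1 i j) =1 act (normal_form k.+1 i' j') ->
  [/\ i k.+1 = i' k.+1, j k = j' k & act (normal_form k i j) =1 act (normal_form k i' j')].
Proof.
move=> hk [bi bj] [bi' bj'] H.
have hi := bi k.+1; have hi' := bi' k.+1; have hj := bj k; have hj' := bj' k.
have := H (k.+1, false); rewrite !act_normal_form_top; try lia.
case=> ei ej; have {}ei : i k.+1 = i' k.+1 by lia.
have {}ej : j k = j' k.
  by move: ej (hj ltac:(lia)) (hj' ltac:(lia)); case: (j k) => [|[|]]; case: (j' k) => [|[|]].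
split=> //; apply: act_catr_inj (nf_block k (j' k) (i' k.+1)) _ => x.
by have := H x; rewrite !normal_formS // ei ej.
Qed.

Lemma normal_form_act_inj m i j i' j' : nf_bounds m.+2 i j -> nf_bounds m.+2 i' j' ->
  act (normal_form m.+2 i j) =1 act (normal_form m.+2 i' j') ->
  (forall k, 2 <= k <= m.+2 -> i k = i' k) /\ (forall k, 1 <= k <= m.+1 -> j k = j' k).
Proof.
elim: m => [|m IH] hb hb' H; have [ei ej H'] := normal_form_top_uniq (ltn0Sn _) hb hb' H.
  by split=> k hk; [have -> : k = 2 by lia | have -> : k = 1 by lia].
have [IHi IHj] := IH (nf_boundsSn hb) (nf_boundsSn hb') H'.
split=> k hk; [case: (eqVneq k m.+3) => [-> | ?] | case: (eqVneq k m.+2) => [-> | ?]] => //.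
- by apply: IHi; lia.
- by apply: IHj; lia.
Qed.

(** * Coset representatives of D_k in D_(k+1) *)

Definition down (k p : nat) : seq nat := rev (iota p (k.+1 - p)).

Arguments down : simpl never.

Lemma down_split k p : p <= k -> down k p = down k p.+1 ++ [:: p].
Proof. by move=> hp; rewrite /down subSn // rev_cons -cats1 subSS. Qed.

Lemma down_top k : down k k.+1 = [::].
Proof. by rewrite /down subnn. Qed.

Lemma all_down k p (P : pred nat) : (forall b, p <= b <= k -> P b) -> all P (down k p).
Proof.
by move=> hP; rewrite /down all_rev; apply/allP => b; rewrite mem_iota => hb; apply: hP; lia.
Qed.

Lemma all_iota q m (P : pred nat) : (forall b, q <= b < q + m -> P b) -> all P (iota q m).
Proof. by move=> hP; apply/allP => b; rewrite mem_iota; apply: hP. Qed.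

Ltac commuting_run :=
  first [apply: all_down | apply: all_iota]; move=> b hb; apply/andP; split;
  [lia | apply/eqP; first [apply: coxm_far; lia | apply: coxm_0far; apply/eqP; lia]].

Lemma Deq_iota_braid n q m a : 0 < q -> q <= a -> a.+2 <= q + m -> q + m <= n ->
  Deq n (iota q m ++ [:: a]) (a.+1 :: iota q m).
Proof.
move=> hq hqa ham hm.
have -> : iota q m = iota q (a - q) ++ a :: a.+1 :: iota a.+2 (m - (a - q) - 2).
  rewrite {1}(_ : m = (a - q) + (2 + (m - (a - q) - 2))); last lia.
  by rewrite iotaD iotaD (_ : q + (a - q) = a) /= ?addn2 //; lia.
rewrite -catA /= (@Deq_commute_all n (iota a.+2 _) a [::]); last 2 first.
- lia.
- commuting_run.
rewrite cats0 (@Deq_braid n a a.+1) ?coxm_adj; try lia.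
rewrite (@Deq_commute_all n (iota q (a - q)) a.+1) //; first lia.
commuting_run.
Qed.

Lemma Deq_down_braid n k p a l : 0 < p -> p < a -> a <= k -> k < n ->
  Deq n (down k p ++ a :: l) (a.-1 :: down k p ++ l).
Proof.
move=> hp hpa hak hk.
have := Deq_rev (@Deq_iota_braid n p (k.+1 - p) a.-1 hp ltac:(lia) ltac:(lia) ltac:(lia)).
rewrite rev_cat /= rev_cons -cats1 (_ : a.-1.+1 = a); last lia.
by move=> H; have := Deq_ctx [::] l (Deq_sym H); rewrite /= -catA.
Qed.

(* A word of D_(k+1) sending the signed point k+1 to x. *)
Definition coset_rep k (x : nat * bool) : seq nat :=
  if ~~ x.2 then down k x.1
  else if x.1 == 1 then down k 2 ++ [:: 0]
  else down k 1 ++ 0 :: iota 2 (x.1 - 2).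

Definition coset_eq k u v := exists2 h, all (fun b => b < k) h & Deq k.+1 u (h ++ v).

Lemma coset_rep_pos k p s : 1 < k -> 0 < p <= k.+1 -> s <= k ->
  coset_eq k (coset_rep k (p, false) ++ [:: s]) (coset_rep k (act1 s (p, false))).
Proof.
move=> hk hp hs; rewrite /coset_eq /coset_rep /act1 /=.
case: (eqVneq s 0) => [-> | s0] /=.
- case: (ltngtP p 2) => hp2.
  + have -> : p = 1 by lia.
    by exists [::].
  + exists [:: 0]; first by rewrite /=; lia.
    decide_eqs; rewrite (@Deq_commute_all k.+1 (down k p) 0 [::]) ?cats0 //; commuting_run.
  + by rewrite hp2; exists [::].
- case: (ltngtP s p) => hsp.
  + case: (eqVneq s.+1 p) => [<- | nsp]; decide_eqs.
    * by exists [::] => //=; rewrite (@down_split k s) //; lia.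
    * exists [:: s]; first by rewrite /=; lia.
      rewrite (@Deq_commute_all k.+1 (down k p) s [::]) ?cats0 //; try lia; commuting_run.
  + decide_eqs; exists [:: s.-1]; first by rewrite /=; lia.
    by rewrite /= -[down k p]cats0 -catA Deq_down_braid //; lia.
  + subst s; decide_eqs; exists [::] => //=.
    by rewrite (@down_split k p) // -catA /= Deq_cancel ?cats0 //; lia.
Qed.

Lemma down1_split k : 1 < k -> down k 1 = down k 3 ++ [:: 2; 1].
Proof. by move=> hk; rewrite (@down_split k 1) ?(@down_split k 2) -?catA //; lia. Qed.

Lemma coset_rep_neg1 k s : 1 < k -> s <= k ->
  coset_eq k (coset_rep k (1, true) ++ [:: s]) (coset_rep k (act1 s (1, true))).
Proof.
move=> hk hs; have hk0 : 0 < k by lia.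
rewrite /coset_eq /coset_rep /act1 /=.
case: (eqVneq s 0) => [-> | s0] /=.
  by exists [::] => //=; rewrite -catA /= Deq_cancel ?cats0.
case: (eqVneq s 1) => [-> | s1] /=.
  exists [::] => //=; rewrite -catA /= (@Deq_comm k.+1 0 1) //.
  by rewrite (@down_split k 1) // -catA.
case: (eqVneq s 2) => [-> | s2] /=.
  exists [:: 0]; first by rewrite /=; lia.
  rewrite -catA /= (@down_split k 2) // -!catA /= (@Deq_braid k.+1 2 0) //; try lia.
  by rewrite (@Deq_commute_all k.+1 (down k 3) 0) //; commuting_run.
decide_eqs; exists [:: s.-1]; first by rewrite /=; lia.
rewrite -catA /= (@Deq_comm k.+1 0 s) ?coxm_0far //; try lia.
by rewrite Deq_down_braid //; lia.
Qed.

Lemma coset_rep_neg2 k s : 1 < k -> s <= k ->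
  coset_eq k (coset_rep k (2, true) ++ [:: s]) (coset_rep k (act1 s (2, true))).
Proof.
move=> hk hs; have hk0 : 0 < k by lia.
rewrite /coset_eq /coset_rep /act1 /=.
case: (eqVneq s 0) => [-> | s0] /=.
  by exists [::] => //=; rewrite -catA /= Deq_cancel ?cats0.
case: (eqVneq s 1) => [-> | s1] /=.
  exists [::] => //=; rewrite -catA /= (@down_split k 1) // -catA /=.
  by rewrite (@Deq_comm k.+1 1 0) // Deq_cancel.
case: (eqVneq s 2) => [-> | s2] /=.
  by exists [::] => //=; rewrite -catA.
decide_eqs; exists [:: s.-1]; first by rewrite /=; lia.
rewrite -catA /= (@Deq_comm k.+1 0 s) ?coxm_0far //; try lia.
by rewrite Deq_down_braid //; lia.
Qed.

Lemma coset_rep_neg k p s : 1 < k -> 2 < p <= k.+1 -> s <= k ->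
  coset_eq k (coset_rep k (p, true) ++ [:: s]) (coset_rep k (act1 s (p, true))).
Proof.
move=> hk hp hs; have hk0 : 0 < k by lia.
rewrite /coset_eq /coset_rep /act1 /=.
have E : iota 2 (p - 2) = 2 :: iota 3 (p - 3) by rewrite (_ : p - 2 = (p - 3).+1) //; lia.
case: (eqVneq s 0) => [-> | s0] /=.
  decide_eqs; exists [:: 1]; first by rewrite /=; lia.
  rewrite E -catA /= (@Deq_commute_all k.+1 (iota 3 (p - 3)) 0 [::]) ?cats0 //; last commuting_run.
  rewrite (@Deq_braid k.+1 0 2) // down1_split // -!catA /= (@Deq_braid k.+1 2 1) //; try lia.
  by rewrite (@Deq_commute_all k.+1 (down k 3) 1) //; commuting_run.
case: (eqVneq s 1) => [-> | s1] /=.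
  decide_eqs; exists [:: 0]; first by rewrite /=; lia.
  rewrite E -catA /= (@Deq_commute_all k.+1 (iota 3 (p - 3)) 1 [::]) ?cats0 //; last commuting_run.
  rewrite down1_split // -!catA /= {1}(@Deq_comm k.+1 1 0) //.
  rewrite (@Deq_braid k.+1 1 2) // ?(@Deq_braid k.+1 2 0) //; try lia.
  by rewrite (@Deq_commute_all k.+1 (down k 3) 0) ?(@Deq_comm k.+1 0 1) //; commuting_run.
case: (ltngtP s.+1 p) => hsp.
- decide_eqs; exists [:: s]; first by rewrite /=; lia.
  rewrite -catA /= (@Deq_iota_braid k.+1 2 (p - 2) s) //; try lia.
  rewrite (@Deq_comm k.+1 0 s.+1) ?coxm_0far //; try lia.
  by rewrite Deq_down_braid //; lia.
- case: (eqVneq s p) => [esp | nsp].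
  + subst s; decide_eqs; exists [::] => //=.
    rewrite (_ : p.+1 - 2 = (p - 2) + 1); last lia.
    by rewrite iotaD -!catA /= (_ : 2 + (p - 2) = p) //; lia.
  + decide_eqs; exists [:: s.-1]; first by rewrite /=; lia.
    rewrite -catA /= (@Deq_commute_all k.+1 (iota 2 (p - 2)) s [::]) ?cats0 //; try lia;
      last commuting_run.
    rewrite (@Deq_comm k.+1 0 s) ?coxm_0far //; try lia.
    by rewrite Deq_down_braid //; lia.
- decide_eqs; exists [::] => //=.
  rewrite (_ : p - 2 = (s - 2) + 1); last lia.
  rewrite iotaD -!catA /= (_ : 2 + (s - 2) = s); last lia.
  by rewrite -catA /= Deq_cancel ?cats0 //; lia.
Qed.

Lemma act1_range k a x : 0 < k -> a <= k -> 0 < x.1 <= k.+1 -> 0 < (act1 a x).1 <= k.+1.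
Proof. by case: x => p s hk ha /= hp; rewrite /act1 /=; case_eqs. Qed.

Lemma act_range k u x : 0 < k -> all (fun a => a <= k) u -> 0 < x.1 <= k.+1 ->
  0 < (act u x).1 <= k.+1.
Proof.
move=> hk; elim: u x => [|a u IH] x //= /andP [ha hu] hx.
by rewrite act_cons IH // act1_range.
Qed.

Lemma coset_rep_act1 k x s : 1 < k -> 0 < x.1 <= k.+1 -> s <= k ->
  coset_eq k (coset_rep k x ++ [:: s]) (coset_rep k (act1 s x)).
Proof.
case: x => p [] hk /= hp hs; last exact: coset_rep_pos.
case: (ltngtP p 2) => [hp2 | hp2 | ->]; last exact: coset_rep_neg2.
- have -> : p = 1 by lia.
  exact: coset_rep_neg1.
- by apply: coset_rep_neg => //; lia.
Qed.

Lemma coset_rep_act k u x : 1 < k -> all (fun a => a <= k) u -> 0 < x.1 <= k.+1 ->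
  coset_eq k (coset_rep k x ++ u) (coset_rep k (act u x)).
Proof.
move=> hk; elim: u x => [|s u IH] x /=; first by exists [::]; rewrite ?cats0.
move=> /andP [hs hu] hx.
have [h1 hh1 H1] := coset_rep_act1 hk hx hs.
have [h2 hh2 H2] := IH (act1 s x) hu (act1_range (ltnW hk) hs hx).
exists (h1 ++ h2); first by rewrite all_cat hh1 hh2.
by rewrite act_cons -cat1s catA H1 -catA H2 catA.
Qed.

(** * Existence *)

Lemma coset_eq_sym k u v : coset_eq k u v -> coset_eq k v u.
Proof.
case=> h hh H; exists (rev h); first by rewrite all_rev.
rewrite H catA Deq_revK //; apply: sub_all hh => b /=; exact: ltnW.
Qed.

Lemma coset_eq_trans k u v w : coset_eq k u v -> coset_eq k v w -> coset_eq k u w.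
Proof.
case=> h1 hh1 H1 [h2 hh2 H2]; exists (h1 ++ h2); first by rewrite all_cat hh1 hh2.
by rewrite H1 H2 catA.
Qed.

Lemma coset_eq_nf_block k u : 1 < k -> all (fun a => a < k.+1) u ->
  exists e f, [/\ e <= 1, f <= k & coset_eq k u (nf_block k e f)].
Proof.
move=> hk hu; have hx0 : 0 < (k.+1, false).1 <= k.+1 by rewrite /=; lia.
have := coset_rep_act hk hu hx0; rewrite /coset_rep /= down_top.
have := act_range (ltnW hk) hu hx0.
case: (act u (k.+1, false)) => p sg /= hp Hu.
exists sg, (k.+1 - p); split; [by case: (sg) | lia |].
apply: coset_eq_trans Hu (coset_eq_sym _).
have := coset_rep_act hk (nf_block_letters k sg (k.+1 - p)) hx0.
rewrite /coset_rep /= down_top act_nf_block ?subKn //; try lia.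
by case: (sg).
Qed.

Lemma eq_normal_form k i j i' j' : {in [pred q | 2 <= q <= k], i =1 i'} ->
  {in [pred q | 1 <= q < k], j =1 j'} -> normal_form k i j = normal_form k i' j'.
Proof.
move=> hi hj; rewrite /normal_form; congr flatten; apply/eq_in_map => q.
by rewrite mem_iota => hq; rewrite hi ?hj ?inE //; lia.
Qed.

Lemma normal_form_exists_step k w : 1 < k -> all (fun a => a < k.+1) w ->
  (forall w', all (fun a => a < k) w' ->
     exists i j, nf_bounds k i j /\ Deq k w' (normal_form k i j)) ->
  exists i j, nf_bounds k.+1 i j /\ Deq k.+1 w (normal_form k.+1 i j).
Proof.
move=> hk hw IH; have [e [f [he hf [h hh H]]]] := coset_eq_nf_block hk hw.
have [i [j [[bi bj] Hh]]] := IH h hh.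
exists (fun q => if q == k.+1 then f else i q), (fun q => if q == k then e else j q); split.
  by split=> q hq; case: eqP => ?; [lia | apply: bi; lia | lia | apply: bj; lia].
rewrite H normal_formS; last lia.
rewrite !eqxx (Deq_widen (leqnSn k) Hh) (@eq_normal_form k _ _ i j) // => q; rewrite inE => hq.
- by case: eqP => // ?; lia.
- by case: eqP => // ?; lia.
Qed.

Lemma wpow_bool u (b : bool) : wpow u b = if b then u else [::].
Proof. by case: b; rewrite ?wpow1. Qed.

Lemma normal_form2_cons s (a b : bool) : s < 2 ->
  Deq 2 (s :: wpow [:: 1; 0] a ++ wpow [:: 1] b)
        (wpow [:: 1; 0] (a (+) (s == 0)) ++ wpow [:: 1] (~~ b)).
Proof.
have C u : Deq 2 (0 :: 1 :: u) (1 :: 0 :: u) by apply: Deq_comm.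
case: s => [|[|]] // _; case: a; case: b; rewrite !wpow_bool /=.
all: by rewrite ?C ?Deq_cancel.
Qed.

Lemma normal_form2_exists w : all (fun a => a < 2) w ->
  exists i j, nf_bounds 2 i j /\ Deq 2 w (normal_form 2 i j).
Proof.
move=> hw; suff [a [b H]] : exists a b : bool, Deq 2 w (wpow [:: 1; 0] a ++ wpow [:: 1] b).
  exists (fun=> nat_of_bool b), (fun=> nat_of_bool a); split.
    by split=> q hq; [case: (b) => /=; lia | case: (a)].
  by rewrite /normal_form /= cats0.
elim: w hw => [|s w IH] /=; first by exists false, false.
case/andP => hs /IH [a [b H]]; exists (a (+) (s == 0)), (~~ b).
by rewrite H normal_form2_cons.
Qed.

Lemma normal_form_exists m w : all (fun a => a < m.+2) w ->
  exists i j, nf_bounds m.+2 i j /\ Deq m.+2 w (normal_form m.+2 i j).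
Proof.
elim: m w => [|m IH] w hw; first exact: normal_form2_exists.
exact: normal_form_exists_step hw IH.
Qed.

Theorem mainTheorem1 (n : nat) (hn : 2 <= n) (w : seq nat)
    (hw : all (fun a => a < n) w) :
  (exists i j : nat -> nat, nf_bounds n i j /\ Deq n w (normal_form n i j)) /\
  (forall i j i' j' : nat -> nat,
      nf_bounds n i j -> nf_bounds n i' j' ->
      Deq n w (normal_form n i j) -> Deq n w (normal_form n i' j') ->
      (forall k, 2 <= k <= n -> i k = i' k) /\
      (forall k, 1 <= k <= n - 1 -> j k = j' k)).
Proof.
case: n hn hw => [|[|m]] // _ hw.
split; first exact: normal_form_exists.
move=> i j i' j' hb hb' H H'.
apply: normal_form_act_inj hb hb' _ => x.
by apply: act_Deq; apply: Deq_trans (Deq_sym H) H'.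
Qed.
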